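(* Let $M=(Q,R,X,\delta)$ be a rough finite state machine, and let $\delta^*$ and $\delta^{*D}$ be as defined in the context. Then for every $q\in Q$ and all words $x,y\in X^*$, $$\underline{\delta^*(q,xy)}=\underline{\delta^{*D}\big(\underline{\delta^*(q,x)},\,y\big)}\quad\text{and}\quad \overline{\delta^*(q,xy)}=\overline{\delta^{*D}\big(\overline{\delta^*(q,x)},\,y\big)}.$$
   Context: For a finite set $Q$ with an equivalence relation $R$ and $A\subseteq Q$, the lower approximation is $\underline{A}=\bigcup\{[x]\in Q/R: [x]\subseteq A\}$ and the upper approximation is $\overline{A}=\bigcup\{[x]\in Q/R:[x]\cap A\neq\emptyset\}$; the pair $(\underline A,\overline A)$ is the rough set of $A$. A set is definable if it is a union of $R$-classes. A rough finite state machine (RFSM) is a 4-tuple $M=(Q,R,X,\delta)$ where $Q$ is a nonempty finite set of states, $R$ is an equivalence relation on $Q$, $X$ is a nonempty finite set of inputs, and $\delta$ assigns to each $(q,a)\in Q\times X$ a pair $\delta(q,a)=(\underline{\delta(q,a)},\overline{\delta(q,a)})=(\underline{A},\overline{A})$ for some $A\subseteq Q$. $X^*$ denotes the set of finite words over $X$, with empty word $e$. Block transition: for a definable set $D\subseteq Q$ and $a\in X$, $\delta^D(D,a)=(\underline{\delta^D(D,a)},\overline{\delta^D(D,a)})$ with $\underline{\delta^D(D,a)}=\bigcup\{\underline{\delta(q,a)}: q\in B\subseteq D,\ B\in Q/R\}$ and $\overline{\delta^D(D,a)}=\bigcup\{\overline{\delta(q,a)}: q\in B\subseteq D,\ B\in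 Q/R\}$. Extended transition $\delta^*:Q\times X^*\to$ pairs of subsets of $Q$: $\delta^*(q,e)=([q],[q])$, and for $x\in X^*$, $a\in X$: $\underline{\delta^*(q,xa)}=\underline{\delta^D(\underline{\delta^*(q,x)},a)}$ and $\overline{\delta^*(q,xa)}=\overline{\delta^D(\overline{\delta^*(q,x)},a)}$. Extended block transition: for definable $D$ and $x\in X^*$, $\underline{\delta^{*D}(D,x)}=\bigcup\{\underline{\delta^*(q,x)}: q\in B\subseteq D,\ B\in Q/R\}$ and $\overline{\delta^{*D}(D,x)}=\bigcup\{\overline{\delta^*(q,x)}: q\in B\subseteq D,\ B\in Q/R\}$. *)

From mathcomp Require Import all_boot.
Set Implicit Arguments. Unset Strict Implicit. Unset Printing Implicit Defensive.

Section RFSM.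
Variables (Q X : finType) (R : rel Q).

Definition cls (x : Q) : {set Q} := [set y | R x y].

Definition lowerA (A : {set Q}) : {set Q} :=
  \bigcup_(x | cls x \subset A) cls x.
Definition upperA (A : {set Q}) : {set Q} :=
  \bigcup_(x | cls x :&: A != set0) cls x.

Definition definable (D : {set Q}) : Prop :=
  exists S : {set Q}, D = \bigcup_(x in S) cls x.

Variable delta : Q -> X -> {set Q} * {set Q}.
(* delta q a = (lower(delta q a), upper(delta q a)). *)

(* Block transition: the union over q lying in a class B contained in D.
   (q \in B, B \in Q/R, B \subset D  <->  cls q \subset D, by reflexivity.) *)
Definition blockL (D : {set Q}) (a : X) : {set Q} :=
  \bigcup_(q | cls q \subset D) (delta q a).1.
Definition blockU (D : {set Q}) (a : X) : {set Q} :=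
  \bigcup_(q | cls q \subset D) (delta q a).2.

(* Extended transition delta^* : Q x X^* -> pairs; words are seq X,
   the empty word is [::], and x a is rcons x a (hence foldl). *)
Definition ext_step (p : {set Q} * {set Q}) (a : X) : {set Q} * {set Q} :=
  (blockL p.1 a, blockU p.2 a).
Definition delta_star (q : Q) (w : seq X) : {set Q} * {set Q} :=
  foldl ext_step (cls q, cls q) w.

Definition ext_blockL (D : {set Q}) (w : seq X) : {set Q} :=
  \bigcup_(q | cls q \subset D) (delta_star q w).1.
Definition ext_blockU (D : {set Q}) (w : seq X) : {set Q} :=
  \bigcup_(q | cls q \subset D) (delta_star q w).2.

End RFSM.

From mathcomp Require Import all_boot.
Set Implicit Arguments. Unset Strict Implicit. Unset Printing Implicit Defensive.

(* Rough approximations, and hence all the transition sets, are R-closed, i.e.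
   unions of R-classes.  On an R-closed set D the block transition is just the
   union of delta q a over q in D, so it commutes with unions of R-closed sets;
   by induction so does its iteration along a word.  Decomposing the closed set
   delta^*(q,x) into the classes of its points then gives the claim, for the
   lower and the upper components separately. *)

Section ClosedSets.
Variables (Q : finType) (R : rel Q).
Hypotheses (R_refl : reflexive R) (R_sym : symmetric R) (R_trans : transitive R).

Lemma cls_closed p : closed R (cls R p).
Proof.
move=> u v Ruv; rewrite !inE; apply/idP/idP => [Rpu | Rpv].
  exact: R_trans Rpu Ruv.
by apply: R_trans Rpv _; rewrite R_sym.
Qed.

Lemma bigcup_closed (I : finType) (P : pred I) (F : I -> {set Q}) :
  (forall i, closed R (F i)) -> closed R (\bigcup_(i | P i) F i).
Proof.
move=> clF u v Ruv; apply/bigcupP/bigcupP => -[i Pi Fi]; exists i => //.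
  by rewrite -(clF i u v Ruv).
by rewrite (clF i u v Ruv).
Qed.

Lemma lowerA_closed A : closed R (lowerA R A).
Proof. exact/bigcup_closed/cls_closed. Qed.

Lemma upperA_closed A : closed R (upperA R A).
Proof. exact/bigcup_closed/cls_closed. Qed.

Lemma sub_clsE (D : {set Q}) p : closed R D -> (cls R p \subset D) = (p \in D).
Proof.
move=> clD; apply/subsetP/idP => [-> // | pD v]; first by rewrite inE.
by rewrite inE => Rpv; rewrite -(clD p v Rpv).
Qed.

Lemma closed_cover (D : {set Q}) : closed R D -> D = \bigcup_(p in D) cls R p.
Proof.
move=> clD; apply/setP => v; apply/idP/bigcupP => [vD | [p pD]].
  by exists v; rewrite // inE.
by rewrite inE => Rpv; rewrite -(clD p v Rpv).
Qed.

Variables (X : finType) (f : Q -> X -> {set Q}).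
Hypothesis f_closed : forall q a, closed R (f q a).

Definition block (D : {set Q}) (a : X) : {set Q} :=
  \bigcup_(q | cls R q \subset D) f q a.

Definition iter_block (D : {set Q}) (w : seq X) : {set Q} := foldl block D w.

Lemma block_closed (D : {set Q}) a : closed R (block D a).
Proof. exact: bigcup_closed. Qed.

Lemma iter_block_closed (D : {set Q}) w : closed R D -> closed R (iter_block D w).
Proof. by elim: w D => [// | a w IHw] D _ /=; apply/IHw/block_closed. Qed.

Lemma block_closedE (D : {set Q}) a : closed R D -> block D a = \bigcup_(q in D) f q a.
Proof. by move=> clD; apply: eq_bigl => q; rewrite sub_clsE. Qed.

Lemma block_bigcup (I : finType) (P : pred I) (F : I -> {set Q}) a :
  (forall i, closed R (F i)) ->
  block (\bigcup_(i | P i) F i) a = \bigcup_(i | P i) block (F i) a.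
Proof.
move=> clF; rewrite block_closedE; last exact: bigcup_closed.
apply/setP => z; apply/bigcupP/bigcupP => [[q /bigcupP [i Pi qF] zf] | [i Pi]].
  by exists i => //; rewrite block_closedE //; apply/bigcupP; exists q.
rewrite block_closedE // => /bigcupP [q qF zf].
by exists q => //; apply/bigcupP; exists i.
Qed.

Lemma iter_block_bigcup (I : finType) (P : pred I) (F : I -> {set Q}) w :
  (forall i, closed R (F i)) ->
  iter_block (\bigcup_(i | P i) F i) w = \bigcup_(i | P i) iter_block (F i) w.
Proof.
elim: w F => [// | a w IHw] F clF /=.
by rewrite block_bigcup // IHw // => i; apply: block_closed.
Qed.

Lemma iter_block_closed_cover (D : {set Q}) w : closed R D ->
  iter_block D w = \bigcup_(p in D) iter_block (cls R p) w.
Proof.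
move=> clD; rewrite {1}(closed_cover clD); apply: iter_block_bigcup.
exact: cls_closed.
Qed.

End ClosedSets.

Section ExtendedTransitions.
Variables (Q X : finType) (R : rel Q) (delta : Q -> X -> {set Q} * {set Q}).

Lemma foldl_ext_step_fst p w :
  (foldl (ext_step R delta) p w).1 =
    iter_block R (fun q a => (delta q a).1) p.1 w.
Proof. by elim: w p => [// | a w IHw] p /=; rewrite IHw. Qed.

Lemma foldl_ext_step_snd p w :
  (foldl (ext_step R delta) p w).2 =
    iter_block R (fun q a => (delta q a).2) p.2 w.
Proof. by elim: w p => [// | a w IHw] p /=; rewrite IHw. Qed.

Lemma delta_star_catE q x y :
  (delta_star R delta q (x ++ y)).1 =
    iter_block R (fun q a => (delta q a).1) (delta_star R delta q x).1 y /\
  (delta_star R delta q (x ++ y)).2 =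
    iter_block R (fun q a => (delta q a).2) (delta_star R delta q x).2 y.
Proof. by rewrite /delta_star foldl_cat foldl_ext_step_fst foldl_ext_step_snd. Qed.

Hypotheses (R_refl : reflexive R) (R_sym : symmetric R) (R_trans : transitive R).
Hypothesis delta_rough : forall q a, exists A, delta q a = (lowerA R A, upperA R A).

Lemma delta_lower_closed q a : closed R (delta q a).1.
Proof. by have [A ->] := delta_rough q a; apply: lowerA_closed. Qed.

Lemma delta_upper_closed q a : closed R (delta q a).2.
Proof. by have [A ->] := delta_rough q a; apply: upperA_closed. Qed.

Lemma ext_blockL_closedE (D : {set Q}) w : closed R D ->
  ext_blockL R delta D w = iter_block R (fun q a => (delta q a).1) D w.
Proof.
move=> clD; rewrite iter_block_closed_cover //; last exact: delta_lower_closed.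
apply: eq_big => [p | p _]; first by rewrite sub_clsE.
by rewrite /delta_star foldl_ext_step_fst.
Qed.

Lemma ext_blockU_closedE (D : {set Q}) w : closed R D ->
  ext_blockU R delta D w = iter_block R (fun q a => (delta q a).2) D w.
Proof.
move=> clD; rewrite iter_block_closed_cover //; last exact: delta_upper_closed.
apply: eq_big => [p | p _]; first by rewrite sub_clsE.
by rewrite /delta_star foldl_ext_step_snd.
Qed.

Lemma delta_star_lower_closed q w : closed R (delta_star R delta q w).1.
Proof.
rewrite /delta_star foldl_ext_step_fst.
by apply: iter_block_closed; [exact: delta_lower_closed | exact: cls_closed].
Qed.

Lemma delta_star_upper_closed q w : closed R (delta_star R delta q w).2.
Proof.
rewrite /delta_star foldl_ext_step_snd.
by apply: iter_block_closed; [exact: delta_upper_closed | exact: cls_closed].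
Qed.

End ExtendedTransitions.

Theorem lemma2p1 (Q X : finType) (R : rel Q)
  (R_refl : reflexive R) (R_sym : symmetric R) (R_trans : transitive R)
  (delta : Q -> X -> {set Q} * {set Q})
  (delta_rough : forall (q : Q) (a : X), exists A : {set Q},
      delta q a = (lowerA R A, upperA R A))
  (q : Q) (x y : seq X) :
  (delta_star R delta q (x ++ y)).1 =
    ext_blockL R delta (delta_star R delta q x).1 y /\
  (delta_star R delta q (x ++ y)).2 =
    ext_blockU R delta (delta_star R delta q x).2 y.
Proof.
have [-> ->] := delta_star_catE R delta q x y.
rewrite ext_blockL_closedE ?ext_blockU_closedE //;
  by [apply: delta_star_lower_closed | apply: delta_star_upper_closed].
Qed.
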